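(* Let $b\in\mathbb{C}\setminus\{0,1\}$ and, for integers $i\ge 1$, let \[ r_i(z)=z^{-i}\Big(b\,e^{z}+(1-b)\sum_{j=0}^{i-1}\frac{z^j}{j!}\Big)\in\mathbb{C}((z)). \] Then for all integers $i,j\ge 1$, \[ \big(r_i(z),\,r_j(-z)\big)=\operatorname{Res}_z\, r_i(z)\,r_j(-z)=0 . \]
   Context: $\mathbb{C}((z))$ denotes formal Laurent series in $z$ with finitely many negative powers; $e^{z}=\sum_{k\ge 0}z^k/k!$ as a formal power series. For $f,g\in\mathbb{C}((z))$ the bilinear form is $(f(z),g(z))=\operatorname{Res}_z f(z)g(z)$, the coefficient of $z^{-1}$ in the product $f(z)g(z)$. *)

From mathcomp Require Import all_boot all_order all_algebra.
From mathcomp Require Import complex.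
From mathcomp Require Import reals.
Set Implicit Arguments. Unset Strict Implicit. Unset Printing Implicit Defensive.
Import Order.TTheory GRing.Theory Num.Theory.
Local Open Scope ring_scope.

(* A formal Laurent series  z^{-lshift} * sum_{k>=0} lcoef k z^k  with
   coefficients in a ring K (finitely many negative powers). *)
Record laurent (K : Type) := Laurent { lshift : nat; lcoef : nat -> K }.

Section Laurent.
Variable K : comRingType.

Definition lcoeff (f : laurent K) (m : int) : K :=
  match (m + (lshift f)%:Z)%R with
  | Posz k => lcoef f k
  | Negz _ => 0
  end.

Definition lmul (f g : laurent K) : laurent K :=
  Laurent (lshift f + lshift g)
    (fun n => \sum_(k < n.+1) lcoef f k * lcoef g (n - k)%N).

(* substitution z |-> -z :  (-z)^{-s} sum a_k (-z)^k = z^{-s} sum (-1)^{k+s} a_k z^k *)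
Definition lneg (f : laurent K) : laurent K :=
  Laurent (lshift f) (fun k => (-1) ^+ (k + lshift f) * lcoef f k).

Definition lshiftby (i : nat) (f : laurent K) : laurent K :=
  Laurent (lshift f + i) (lcoef f).

Definition Res (f : laurent K) : K := lcoeff f (-1).

Definition lform (f g : laurent K) : K := Res (lmul f g).
End Laurent.

Section Series.
Variable K : fieldType.
Definition pser (a : nat -> K) : laurent K := Laurent 0 a.
Definition expz : laurent K := pser (fun k => (k`!%:R)^-1).
Definition exptrunc (i : nat) : laurent K :=
  pser (fun k => if (k < i)%N then (k`!%:R)^-1 else 0).
Definition lcomb (b c : K) (f g : laurent K) : laurent K :=
  Laurent 0 (fun k => b * lcoeff f k%:Z + c * lcoeff g k%:Z).
Definition r_ (b : K) (i : nat) : laurent K :=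
  lshiftby i (lcomb b (1 - b) expz (exptrunc i)).
End Series.

(* The coefficient of z^(k-i) in r_i(z) is c_k / k!, where c_k = 1 for k < i
   and c_k = b otherwise.  The residue of r_i(z) r_j(-z) collects the pairs
   k + m = i + j - 1, and for each of them exactly one of k < i, m < j holds,
   so c_k c_m = b throughout.  Hence the residue is b (-1)^j / (i+j-1)! times
   the alternating sum of the binomial coefficients C(i+j-1, m), which is
   (1 - 1)^(i+j-1) = 0. *)

From Pilot Require Import Defs.
From mathcomp Require Import all_boot all_order all_algebra.
From mathcomp Require Import complex.
From mathcomp Require Import reals.
From mathcomp Require Import zify ring.
Import GRing.Theory Num.Theory.
Local Open Scope ring_scope.

(* Plain [lshift] is fintype's ordinal shift, which shadows the field of [laurent]. *)
Lemma Res_lmul (K : comNzRingType) (f g : laurent K) (n : nat) :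
  (Defs.lshift f + Defs.lshift g)%N = n.+1 ->
  Res (lmul f g) = \sum_(k < n.+1) lcoef f k * lcoef g (n - k).
Proof.
move=> fg_shift; rewrite /Res /lcoeff /= fg_shift.
by have -> : -1 + n.+1%:Z = n by rewrite -addn1 PoszD addrC addrK.
Qed.

Lemma lcoef_lneg (K : comNzRingType) (f : laurent K) (k : nat) :
  lcoef (lneg f) k = (-1) ^+ (k + Defs.lshift f) * lcoef f k.
Proof. by []. Qed.

Lemma lcoef_r (K : fieldType) (b : K) (i k : nat) :
  lcoef (r_ b i) k = (if (k < i)%N then 1 else b) / k`!%:R.
Proof.
rewrite /r_ /lshiftby /= /lcoeff /= addn0.
by case: ifP => _; rewrite ?mulr0 ?addr0 // mulrBl mul1r addrC subrK.
Qed.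

Lemma sum_signed_binomial (R : pzRingType) (n : nat) : (0 < n)%N ->
  \sum_(k < n.+1) (-1) ^+ (n - k) *+ 'C(n, k) = 0 :> R.
Proof.
move=> n_gt0; have := exprDn_comm n (commr1 (-1 : R)).
rewrite addNr expr0n gtn_eqF // mulr0n => binomial_sum.
by rewrite [RHS]binomial_sum; apply: eq_bigr => k _; rewrite expr1n mulr1.
Qed.

Lemma lform_r_lneg_r (K : numFieldType) (b : K) (i j n : nat) :
  (i + j)%N = n.+1 ->
  lform (r_ b i) (lneg (r_ b j)) =
    b * (-1) ^+ j / n`!%:R * \sum_(k < n.+1) (-1) ^+ (n - k) *+ 'C(n, k).
Proof.
move=> ij_n; rewrite /lform (@Res_lmul _ _ _ n); last by rewrite /= !add0n.
rewrite mulr_sumr; apply: eq_bigr => -[k le_kn] _.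
rewrite lcoef_lneg !lcoef_r /= add0n exprD -[_ *+ 'C(n, k)]mulr_natr.
rewrite -(bin_fact (le_kn : (k <= n)%N)) !natrM.
have -> : (k < i)%N = ~~ (n - k < j)%N by apply/idP/idP; rewrite -ltnNge; lia.
have fact_neq0 m : (m`!%:R : K) != 0 by rewrite pnatr_eq0 -lt0n fact_gt0.
have bin_neq0 : ('C(n, k)%:R : K) != 0 by rewrite pnatr_eq0 -lt0n bin_gt0.
by case: (n - k < j)%N => /=; field; rewrite ?fact_neq0 ?andbT.
Qed.

Theorem lemma1 (R : realType) (b : R[i]) (hb0 : b != 0) (hb1 : b != 1)
  (i j : nat) (hi : (1 <= i)%N) (hj : (1 <= j)%N) :
  lform (r_ b i) (lneg (r_ b j)) = 0.
Proof.
rewrite (@lform_r_lneg_r _ _ _ _ (i + j).-1); last by rewrite prednK // addn_gt0 hi.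
by rewrite sum_signed_binomial ?mulr0 // -subn1 subn_gt0 -addn1 leq_add.
Qed.
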